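(* If the Markov chain $\mathcal{M}$ is started from a connected configuration of particles, then every configuration reached during its execution is connected.
   Context: Let $\Gamma$ be the triangular lattice; a configuration is a finite set of occupied vertices (''locations'') of $\Gamma$, each occupied by one particle; it is connected if the subgraph induced by occupied locations is connected. For a location $\ell$, $N(\ell)$ is the set of particles at locations adjacent to $\ell$. For adjacent $\ell,\ell'$, let $\mathbb{S}=N(\ell)\cap N(\ell')$ and $N(\ell\cup\ell')=(N(\ell)\cup N(\ell'))$ minus particles located at $\ell$ or $\ell'$. Property 1: $|\mathbb{S}|\in\{1,2\}$ and every particle in $N(\ell\cup\ell')$ is connected to a particle of $\mathbb{S}$ by a lattice path all of whose vertices are particles of $N(\ell\cup\ell')$. Property 2: $|\mathbb{S}|=0$; each of $\ell,\ell'$ has at least one adjacent particle other than one located at the other location; the particles of $N(\ell)$ not at $\ell'$ are connected by paths within this set; the particles of $N(\ell')$ not at $\ell$ are connected by paths within this set. One step of $\mathcal{M}$ (bias $\lambda>0$) from $\sigma$: choose a particle $P$ uniformly (location $\ell$), a neighbor $\ell'$ of $\ell$ uniformly among six, and $q$ uniform in $(0,1)$. If $\ell'$ is occupied, do nothing. Otherwise let $t$ (resp. $t'$) be the number of triangular faces incident to $\ell$ (resp. $\ell'$) with all three vertices occupied when $P$ is at $\ell$ (resp. at $\ell'$); move $P$ to $\ell'$ if (1) $\ell$ does not have exactly five occupied neighbors, (2) $\ell,\ell'$ satisfy Property 1 or 2, and (3) $q<\lambda^{t'-t}$; else do nothing. *)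

(* Triangular lattice in axial coordinates on Z x Z. *)
From Stdlib Require Import Reals ZArith List Bool.
Import ListNotations.
Open Scope Z_scope.

Definition loc := (Z * Z)%type.

Definition loc_add (a b : loc) : loc := (fst a + fst b, snd a + snd b).
Definition loc_eqb (a b : loc) : bool := Z.eqb (fst a) (fst b) && Z.eqb (snd a) (snd b).

Definition d0 : loc := (1, 0).
Definition d1 : loc := (0, 1).
Definition d2 : loc := (-1, 1).
Definition d3 : loc := (-1, 0).
Definition d4 : loc := (0, -1).
Definition d5 : loc := (1, -1).
Definition dirs : list loc := [d0; d1; d2; d3; d4; d5].

(* The six triangular faces incident to a vertex l are {l, l+a, l+b} for
   consecutive directions (a,b). *)
Definition faces : list (loc * loc) :=
  [(d0,d1); (d1,d2); (d2,d3); (d3,d4); (d4,d5); (d5,d0)].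

Definition adj (a b : loc) : Prop := exists d, In d dirs /\ b = loc_add a d.
Definition adjb (a b : loc) : bool := existsb (fun d => loc_eqb (loc_add a d) b) dirs.

(* A configuration: the finite set of occupied locations, given by a list
   (only membership matters). *)
Definition config := list loc.
Definition occ (s : config) (x : loc) : Prop := In x s.
Definition occb (s : config) (x : loc) : bool := existsb (loc_eqb x) s.

Inductive path_in (S : loc -> Prop) : loc -> loc -> Prop :=
| path_refl a : S a -> path_in S a a
| path_step a b c : S a -> adj a b -> path_in S b c -> path_in S a c.

Definition connected (s : config) : Prop :=
  forall a b, occ s a -> occ s b -> path_in (occ s) a b.

Definition Nb (s : config) (l : loc) (x : loc) : Prop := occ s x /\ adj x l.

(* S = N(l) ∩ N(l'), and its cardinality (counted over distinct neighbour locations of l). *)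
Definition Sset (s : config) (l l' : loc) (x : loc) : Prop := Nb s l x /\ Nb s l' x.
Definition Scard (s : config) (l l' : loc) : nat :=
  length (filter (fun d => occb s (loc_add l d) && adjb (loc_add l d) l') dirs).

(* N(l ∪ l') = (N(l) ∪ N(l')) minus particles at l or l'. *)
Definition Nunion (s : config) (l l' : loc) (x : loc) : Prop :=
  (Nb s l x \/ Nb s l' x) /\ x <> l /\ x <> l'.

Definition Property1 (s : config) (l l' : loc) : Prop :=
  (Scard s l l' = 1%nat \/ Scard s l l' = 2%nat) /\
  forall x, Nunion s l l' x -> exists y, Sset s l l' y /\ path_in (Nunion s l l') x y.

Definition Nminus (s : config) (l other : loc) (x : loc) : Prop := Nb s l x /\ x <> other.

Definition Property2 (s : config) (l l' : loc) : Prop :=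
  Scard s l l' = 0%nat /\
  (exists x, Nminus s l l' x) /\
  (exists x, Nminus s l' l x) /\
  (forall x y, Nminus s l l' x -> Nminus s l l' y -> path_in (Nminus s l l') x y) /\
  (forall x y, Nminus s l' l x -> Nminus s l' l y -> path_in (Nminus s l' l) x y).

Definition n_occ_nbrs (s : config) (l : loc) : nat :=
  length (filter (fun d => occb s (loc_add l d)) dirs).

(* Number of triangular faces incident to l with all three vertices occupied
   (l itself being occupied). *)
Definition tri (s : config) (l : loc) : nat :=
  length (filter (fun f => occb s (loc_add l (fst f)) && occb s (loc_add l (snd f))) faces).

Definition move (s : config) (l l' : loc) : config :=
  l' :: filter (fun x => negb (loc_eqb x l)) s.

Definition move_ok (lam : R) (s : config) (l l' : loc) (q : R) : Prop :=
  n_occ_nbrs s l <> 5%nat /\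
  (Property1 s l l' \/ Property2 s l l') /\
  (q < powerRZ lam (Z.of_nat (tri (move s l l') l') - Z.of_nat (tri s l)))%R.

Definition step (lam : R) (s s' : config) : Prop :=
  exists l d q, occ s l /\ In d dirs /\ (0 < q < 1)%R /\
    let l' := loc_add l d in
    ((occ s l' \/ ~ move_ok lam s l l' q) /\ s' = s) \/
    (~ occ s l' /\ move_ok lam s l l' q /\ s' = move s l l').

Inductive reachable (lam : R) (s0 : config) : config -> Prop :=
| reach_refl : reachable lam s0 s0
| reach_step s s' : reachable lam s0 s -> step lam s s' -> reachable lam s0 s'.

From Stdlib Require Import Reals ZArith List Bool Lia.
Import ListNotations.
Open Scope Z_scope.

(* Only a move can change the configuration.  When the particle at l moves to
   l', take any other particle a: a path from a to l in the old configuration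
   reaches l through a last vertex w adjacent to l, and the part before w
   survives the move.  It remains to join the neighbour w of l to l' without
   passing through l.  Under Property 1 this is done inside N(l ∪ l') through
   a common neighbour of l and l'.  Under Property 2, w is joined inside
   N(l) \ {l'} to the last vertex before l of a path from some neighbour z of
   l' to l; reversing that path leads to z and then to l'.  So every particle
   reaches l', and the new configuration is connected. *)

Lemma loc_eq_dec (a b : loc) : {a = b} + {a <> b}.
Proof. decide equality; apply Z.eq_dec. Qed.

Lemma loc_eqb_eq (a b : loc) : loc_eqb a b = true <-> a = b.
Proof.
  destruct a as [a1 a2], b as [b1 b2]; unfold loc_eqb; simpl.
  rewrite andb_true_iff, !Z.eqb_eq; split.
  - now intros [-> ->].
  - now intros [= -> ->].
Qed.

Lemma adj_sym (a b : loc) : adj a b -> adj b a.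
Proof.
  intros [d [Hd ->]]; exists (- fst d, - snd d); split.
  - unfold dirs, d0, d1, d2, d3, d4, d5 in *; simpl in Hd.
    destruct Hd as [<-|[<-|[<-|[<-|[<-|[<-|[]]]]]]]; simpl; tauto.
  - destruct a, d; unfold loc_add; simpl; f_equal; ring.
Qed.

Lemma adj_neq (a b : loc) : adj a b -> a <> b.
Proof.
  intros [d [Hd ->]]; destruct a as [a1 a2].
  unfold dirs, loc_add, d0, d1, d2, d3, d4, d5 in *; simpl in *.
  destruct Hd as [<-|[<-|[<-|[<-|[<-|[<-|[]]]]]]]; simpl; intros [=]; lia.
Qed.

Section Paths.

Variable P : loc -> Prop.

Lemma path_in_end (a b : loc) : path_in P a b -> P b.
Proof. induction 1; auto. Qed.

Lemma path_in_trans (a b c : loc) : path_in P a b -> path_in P b c -> path_in P a c.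
Proof. induction 1; intros; auto; eapply path_step; eauto. Qed.

Lemma path_in_rcons (a b c : loc) : path_in P a b -> P c -> adj b c -> path_in P a c.
Proof.
  intros Hab Hc Hbc; apply path_in_trans with b; [exact Hab|].
  apply path_step with c; [exact (path_in_end _ _ Hab)|exact Hbc|now apply path_refl].
Qed.

Lemma path_in_sym (a b : loc) : path_in P a b -> path_in P b a.
Proof.
  induction 1; [now apply path_refl|].
  eapply path_in_rcons; eauto using adj_sym.
Qed.

Lemma path_in_weaken (Q : loc -> Prop) (a b : loc) :
  (forall x, P x -> Q x) -> path_in P a b -> path_in Q a b.
Proof. intros HPQ; induction 1; econstructor; eauto. Qed.

Lemma path_in_last_step (a b : loc) : path_in P a b -> a <> b ->
  exists w, adj w b /\ path_in (fun x => P x /\ x <> b) a w.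
Proof.
  induction 1 as [a Ha | a b c Ha Hab Hbc IH]; intros Hac; [congruence|].
  destruct (loc_eq_dec b c) as [<-|Hbc'].
  - exists a; split; [|apply path_refl]; auto.
  - destruct (IH Hbc') as [w [Hwc Hw]].
    exists w; split; [|eapply path_step]; eauto.
Qed.

End Paths.

Lemma occ_move (s : config) (l l' x : loc) :
  occ (move s l l') x <-> x = l' \/ (occ s x /\ x <> l).
Proof.
  unfold occ, move; simpl; rewrite filter_In, negb_true_iff.
  split; intros [<-|[Hx Hxl]]; auto; right; split; auto.
  - now intros ->; rewrite (proj2 (loc_eqb_eq l l) eq_refl) in Hxl.
  - destruct (loc_eqb x l) eqn:E; auto; now apply loc_eqb_eq in E.
Qed.

Section Move.

Variables (s : config) (l l' : loc).
Hypotheses (Hconn : connected s) (Hl : occ s l) (Hl' : ~ occ s l').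

Local Notation occ' := (occ (move s l l')).

Lemma occ_move_target : occ' l'.
Proof. now apply occ_move; left. Qed.

Lemma occ_move_other (x : loc) : occ s x -> x <> l -> occ' x.
Proof. now intros; apply occ_move; right. Qed.

Lemma path_move_to_source_nbr (a : loc) : occ s a -> a <> l ->
  exists w, Nb s l w /\ path_in occ' a w.
Proof.
  intros Ha Hal.
  destruct (path_in_last_step _ _ _ (Hconn a l Ha Hl) Hal) as [w [Hw_adj Haw]].
  exists w; split.
  - split; [exact (proj1 (path_in_end _ _ _ Haw))|exact Hw_adj].
  - eapply path_in_weaken; [|exact Haw].
    intros x [Hx Hxl]; now apply occ_move_other.
Qed.

Lemma path_move_nbr_target_P1 (w : loc) :
  Property1 s l l' -> Nb s l w -> path_in occ' w l'.
Proof.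
  intros [_ Hjoin] [Hw Hw_adj].
  destruct (Hjoin w) as [y [[_ [_ Hy_adj]] Hwy]].
  { repeat split; [now left| |]; [now apply adj_neq|now intros ->]. }
  apply path_in_rcons with y; [|exact occ_move_target|exact Hy_adj].
  eapply path_in_weaken; [|exact Hwy].
  intros x [[[Hx _]|[Hx _]] [Hxl _]]; now apply occ_move_other.
Qed.

Lemma path_move_nbr_target_P2 (w : loc) :
  Property2 s l l' -> Nb s l w -> path_in occ' w l'.
Proof.
  intros [_ [_ [[z [[Hz Hz_adj] Hzl]] [Hjoin _]]]] Hw.
  assert (Hwl' : w <> l') by (intros ->; exact (Hl' (proj1 Hw))).
  destruct (path_move_to_source_nbr z Hz Hzl) as [v [Hv Hzv]].
  assert (Hvl' : v <> l') by (intros ->; exact (Hl' (proj1 Hv))).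
  assert (Hwv : path_in occ' w v).
  { eapply path_in_weaken; [|apply Hjoin; split; assumption].
    intros x [[Hx Hx_adj] _]; apply occ_move_other; auto using adj_neq. }
  apply path_in_trans with v; [exact Hwv|].
  apply path_in_rcons with z; [now apply path_in_sym|exact occ_move_target|exact Hz_adj].
Qed.

Lemma path_move_to_target (a : loc) :
  Property1 s l l' \/ Property2 s l l' -> occ' a -> path_in occ' a l'.
Proof.
  intros HP Ha; apply occ_move in Ha as [->|[Ha Hal]];
    [exact (path_refl _ _ occ_move_target)|].
  destruct (path_move_to_source_nbr a Ha Hal) as [w [Hw Haw]].
  apply path_in_trans with w; [exact Haw|].
  destruct HP as [HP|HP];
    [exact (path_move_nbr_target_P1 w HP Hw)|exact (path_move_nbr_target_P2 w HP Hw)].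
Qed.

Lemma move_connected :
  Property1 s l l' \/ Property2 s l l' -> connected (move s l l').
Proof.
  intros HP a b Ha Hb; apply path_in_trans with l';
    [|apply path_in_sym]; now apply path_move_to_target.
Qed.

End Move.

Lemma step_connected (lam : R) (s s' : config) :
  connected s -> step lam s s' -> connected s'.
Proof.
  intros Hs [l [d [q [Hl [_ [_ [[_ ->]|[Hl' [[_ [HP _]] ->]]]]]]]]];
    [exact Hs|now apply move_connected].
Qed.

Theorem lemma4 (lam : R) (s0 s : config) :
  (0 < lam)%R -> connected s0 -> reachable lam s0 s -> connected s.
Proof.
  intros _ H0 Hr; induction Hr; eauto using step_connected.
Qed.
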